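(* Let $N \ge 1$ and let $W_N$ be the set of binary words of length $N$. Define $\varphi_1 : W_N \to W_N$ by $\varphi_1(u) = 1^p v 0$ if $u = v 0 1^p$ for some (possibly empty) word $v$ and some $p \geq 1$, and $\varphi_1(u) = u$ otherwise. Then $|P(\varphi_1(u))| = |P(u)|$ for every $u \in W_N$.
   Context: For a binary word $x$, $x^j$ denotes $j$ concatenated copies of $x$, and juxtaposition denotes concatenation. For a binary word $w = w_1 \cdots w_\ell$ of length $\ell$, $P(w)$ is the set of indices $i \geq 2$ such that at least one of the following holds: (i) $\ell \geq i$ and $w_{i-1} w_i = 00$; (ii) $\ell \geq i+2$ and $w_{i-1} w_i w_{i+1} w_{i+2} = 0100$; (iii) $\ell \geq i+3$ and $w_{i-1} \cdots w_{i+3} = 01010$. *)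

From mathcomp Require Import all_boot.
Set Implicit Arguments. Unset Strict Implicit. Unset Printing Implicit Defensive.

(* Binary words: seq bool, with letter 0 = false and letter 1 = true. *)
Definition word := seq bool.

(* 1-indexed letter access: letter w j = w_j (meaningful for 1 <= j <= size w). *)
Definition letter (w : word) (j : nat) : bool := nth false w j.-1.

Definition inP (w : word) (i : nat) : bool :=
  let l := size w in
  (2 <= i) &&
  [|| (i <= l) && ~~ letter w i.-1 && ~~ letter w i
    , (i + 2 <= l) && ~~ letter w i.-1 && letter w i
        && ~~ letter w (i + 1) && ~~ letter w (i + 2)
    | (i + 3 <= l) && ~~ letter w i.-1 && letter w i
        && ~~ letter w (i + 1) && letter w (i + 2) && ~~ letter w (i + 3) ].

(* P(w) as the (duplicate-free, increasing) list of its elements.  Every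
   condition forces i <= size w, so ranging over 0..size w loses nothing. *)
Definition P (w : word) : seq nat := [seq i <- iota 0 (size w).+1 | inP w i].

(* phi_1: if u = v 0 1^p with p >= 1, return 1^p v 0; otherwise u.
   p is the number of trailing 1s of u; such a decomposition exists iff
   1 <= p < size u, and then v = the first (size u - p - 1) letters. *)
Definition trailing_ones (u : word) : nat := find negb (rev u).

Definition phi1 (u : word) : word :=
  let p := trailing_ones u in
  if (1 <= p) && (p < size u)
  then nseq p true ++ take (size u - p - 1) u ++ [:: false]
  else u.

(* Membership i ∈ P(w) only depends on the letters from position i-1 on, and
   says that this suffix starts with 00, 0100 or 01010.  So |P(w)| counts the
   suffixes of w that start with one of these patterns.  Every pattern starts
   with 0, so a block of leading 1s contributes nothing; and after a 0 a block
   of trailing 1s can neither create nor complete a pattern, since every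
   pattern has a 0 right after each of its 1s.  Hence moving the block 1^p of
   u = v 0 1^p to the front leaves the count unchanged. *)
From mathcomp Require Import all_boot zify.

Definition P_head (s : word) : bool :=
  match s with
  | false :: false :: _
  | false :: true :: false :: false :: _
  | false :: true :: false :: true :: false :: _ => true
  | _ => false
  end.

Lemma inP_P_head w k : inP w k.+2 = P_head (drop k w).
Proof.
rewrite /inP /letter.
have nthD j : nth false w (k + j) = nth false (drop k w) j by rewrite nth_drop.
have leqD j : 0 < j -> (k + j <= size w) = (j <= size (drop k w)).
  by move=> ?; rewrite size_drop; apply/idP/idP; lia.
rewrite (_ : (k.+2).-1.-1 = k + 0) 1?(_ : (k.+2).-1 = k + 1) ?nthD; try lia.
rewrite (_ : (k.+2 + 1).-1 = k + 2) 1?(_ : (k.+2 + 2).-1 = k + 3) ?nthD; try lia.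
rewrite (_ : (k.+2 + 3).-1 = k + 4) ?nthD; last by lia.
rewrite (_ : k.+2 = k + 2) 1?(_ : k + 2 + 2 = k + 4) 1?(_ : k + 2 + 3 = k + 5);
  rewrite ?leqD //; try lia.
rewrite (_ : 1 < k + 2) //; last by lia.
case: (drop k w) => [|x0 [|x1 [|x2 [|x3 [|x4 s]]]]] /=;
  by repeat match goal with x : bool |- _ => case: x end.
Qed.

Fixpoint P_heads (w : word) : nat :=
  if w is x :: s then P_head (x :: s) + P_heads s else 0.

Lemma P_heads_count w :
  P_heads w = count (fun k => P_head (drop k w)) (iota 0 (size w)).
Proof. by elim: w => //= x s ->; rewrite -(addn0 1) iotaDl count_map. Qed.

Lemma P_head_short s : size s <= 1 -> P_head s = false.
Proof. by case: s => [|[] [|? ?]]. Qed.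

Lemma size_P w : size (P w) = P_heads w.
Proof.
rewrite /P size_filter P_heads_count.
case Ew: (size w) => [|n]; first by rewrite /= /inP.
rewrite -[iota 0 n.+2]/([:: 0; 1] ++ iota 2 n) count_cat -(addn0 2) iotaDl count_map.
rewrite -[n.+1]addn1 iotaD count_cat /= P_head_short ?size_drop ?Ew; last by lia.
by rewrite !addn0; apply: eq_count => k /=; rewrite addnC addn2 inP_P_head.
Qed.

Lemma P_heads_ones_cat p s : P_heads (nseq p true ++ s) = P_heads s.
Proof. by elim: p => //= p ->. Qed.

Lemma P_head_cat0_ones s p :
  P_head ((s ++ [:: false]) ++ nseq p true) = P_head (s ++ [:: false]).
Proof.
case: s => [|x0 [|x1 [|x2 [|x3 [|y s]]]]] /=; (do 4 try case: p => [|p]) => /=;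
  by repeat match goal with x : bool |- _ => case: x end.
Qed.

Lemma P_heads_cat0_ones v p :
  P_heads ((v ++ [:: false]) ++ nseq p true) = P_heads (v ++ [:: false]).
Proof.
elim: v => [|x v IHv]; last by have /= -> := P_head_cat0_ones (x :: v) p; rewrite IHv.
have /= -> := P_head_cat0_ones [::] p.
by rewrite -(cats0 (nseq p true)) P_heads_ones_cat.
Qed.

Lemma find_negb_split s :
  find negb s < size s -> s = nseq (find negb s) true ++ false :: drop (find negb s).+1 s.
Proof.
elim: s => //= x s IHs; case: x => /= [lt_find|]; last by rewrite drop0.
by rewrite -IHs.
Qed.

Lemma trailing_ones_split u : trailing_ones u < size u ->
  u = (take (size u - trailing_ones u - 1) u ++ [:: false]) ++ nseq (trailing_ones u) true.
Proof.
rewrite /trailing_ones -(size_rev u) => lt_find.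
set p := find negb (rev u); set v := rev (drop p.+1 (rev u)).
have def_u : u = (v ++ [:: false]) ++ nseq p true.
  by rewrite -[u]revK {1}(find_negb_split _ lt_find) rev_cat rev_cons rev_nseq cats1.
have size_v : size v = size (rev u) - p - 1 by rewrite /v size_rev size_drop; lia.
by rewrite -size_v {2}def_u -[(v ++ _) ++ _]catA take_size_cat.
Qed.

Theorem lemma4p1 (N : nat) (hN : 1 <= N) (u : word) (hu : size u = N) :
  size (P (phi1 u)) = size (P u).
Proof.
rewrite !size_P /phi1; case: ifP => // /andP[_ lt_p].
by rewrite [in RHS](trailing_ones_split _ lt_p) P_heads_cat0_ones P_heads_ones_cat.
Qed.
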